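(* $P_n$ has exactly one matching ordering for $n=1$, exactly three matching orderings for $n=3$ and $n=4$, and exactly two matching orderings for every other $n\ge 2$.
   Context: A tournament is a finite, non-null, loopless directed graph in which for any two distinct vertices $u,v$ there is exactly one edge with both ends in $\{u,v\}$; write $u\to v$ for the edge from $u$ to $v$. Given an ordering $v_1,\dots,v_n$ of the vertices, a backedge is an edge $v_j\to v_i$ with $j>i$; the ordering is a matching ordering if every vertex is the head or tail of at most one backedge. $P_n$ is the tournament on $v_1,\dots,v_n$ with $v_i\to v_j$ if $j-i\ge2$ and $v_{i+1}\to v_i$ for $1\le i\le n-1$. *)

From mathcomp Require Import all_boot.
Set Implicit Arguments. Unset Strict Implicit. Unset Printing Implicit Defensive.

(* A directed graph on a finite vertex type T is given by its edge relation
   e : rel T, with  e u v  meaning  u -> v. *)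
Definition is_tournament (T : finType) (e : rel T) : Prop :=
  0 < #|T| /\ (forall u, ~~ e u u) /\
  (forall u v, u != v -> (e u v && ~~ e v u) || (e v u && ~~ e u v)).

(* An ordering v_1,...,v_n of the vertices is an injective (hence bijective)
   map  o : 'I_#|T| -> T ; position i holds vertex o i. *)
Definition is_ordering (T : finType) (o : {ffun 'I_#|T| -> T}) : bool :=
  injectiveb o.

Definition backedge (T : finType) (e : rel T) (o : {ffun 'I_#|T| -> T})
  (p : 'I_#|T| * 'I_#|T|) : bool :=
  (p.1 < p.2) && e (o p.2) (o p.1).

Definition matching_ordering (T : finType) (e : rel T) (o : {ffun 'I_#|T| -> T})
  : bool :=
  is_ordering o &&
  [forall v : T, #|[set p | backedge e o p && ((o p.1 == v) || (o p.2 == v))]| <= 1].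

(* P_n on vertices v_1..v_n, represented by 'I_n (v_{k+1} is k):
   v_i -> v_j iff j - i >= 2, and v_{i+1} -> v_i. *)
Definition Pn_edge (n : nat) : rel 'I_n :=
  fun u v => (u.+2 <= v) || (u == v.+1 :> nat).

Definition num_matching_orderings (T : finType) (e : rel T) : nat :=
  #|[set o : {ffun 'I_#|T| -> T} | matching_ordering e o]|.

(* In a matching ordering of P_n, the vertex in first position is v_1 or v_2; once
   this choice is made every later position is forced: a vertex placed too early or
   too late creates two backedges at some vertex.  Hence for n >= 5 the only matching
   orderings are P_n with the consecutive pairs {v_1,v_2},{v_3,v_4},... swapped, or
   with v_1 fixed and {v_2,v_3},{v_4,v_5},... swapped.  For n <= 4 the orderings are
   enumerated. *)

From mathcomp Require Import all_boot zify.
Set Implicit Arguments. Unset Strict Implicit. Unset Printing Implicit Defensive.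

(* An ordering of P_n is encoded by its table t : seq nat, listing at each position
   the 0-based index of the vertex placed there; [pn_edge] is the edge relation of P_n
   on indices, and [linked (nth 0 t) x y] says that positions x and y span a backedge. *)
Definition pn_edge : rel nat := fun u v => (u.+2 <= v) || (u == v.+1).

Definition is_backedge (f : nat -> nat) (i j : nat) : bool := (i < j) && pn_edge (f j) (f i).

Definition linked (f : nat -> nat) (x y : nat) : bool := is_backedge f x y || is_backedge f y x.

Definition at_most_one_link (n : nat) (f : nat -> nat) : Prop :=
  forall x y z, x < n -> y < n -> z < n -> linked f x y -> linked f x z -> y = z.

Definition matching_table (n : nat) (t : seq nat) : Prop :=
  perm_eq t (iota 0 n) /\ at_most_one_link n (nth 0 t).

Definition matching_tableb (n : nat) (t : seq nat) : bool :=
  perm_eq t (iota 0 n) &&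
  all (fun x => all (fun y => all (fun z =>
    linked (nth 0 t) x y ==> linked (nth 0 t) x z ==> (y == z))
      (iota 0 n)) (iota 0 n)) (iota 0 n).

Lemma matching_tableP n t : reflect (matching_table n t) (matching_tableb n t).
Proof.
apply: (iffP andP) => -[tP links]; split => //.
  have iota_n k : k < n -> k \in iota 0 n by rewrite mem_iota.
  move=> x y z /iota_n xn /iota_n yn /iota_n zn xy xz; apply/eqP.
  by move: links => /allP/(_ x xn)/allP/(_ y yn)/allP/(_ z zn); rewrite xy xz.
apply/allP => x; rewrite mem_iota => /links {}links; apply/allP => y.
rewrite mem_iota => /links {}links; apply/allP => z; rewrite mem_iota => zn.
by apply/implyP => xy; apply/implyP => /(links z zn xy) ->.
Qed.

Lemma is_backedge_linked f i j : is_backedge f i j -> linked f i j /\ linked f j i.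
Proof. by rewrite /linked => ->; rewrite orbT. Qed.

Lemma linked_of_lt f i j : i < j -> pn_edge (f j) (f i) -> linked f i j.
Proof. by rewrite /linked /is_backedge => -> ->. Qed.

Lemma linked_of_gt f i j : j < i -> pn_edge (f i) (f j) -> linked f i j.
Proof. by rewrite /linked /is_backedge => -> ->; rewrite orbT. Qed.

Lemma at_most_one_link_eq_in n f g : (forall i, i < n -> f i = g i) ->
  at_most_one_link n g -> at_most_one_link n f.
Proof.
move=> eq_fg g_one x y z lt_xn lt_yn lt_zn.
by rewrite /linked /is_backedge !eq_fg //; apply: g_one.
Qed.

Lemma perm_iota_uniq n t : size t = n -> {in t, forall x, x < n} ->
  perm_eq t (iota 0 n) = uniq t.
Proof.
move=> size_t t_lt; apply/idP/idP => [tP | uniq_t]; first by rewrite (perm_uniq tP) iota_uniq.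
have sub_t : {subset t <= iota 0 n} by move=> x /t_lt; rewrite mem_iota.
have le_size : size (iota 0 n) <= size t by rewrite size_iota size_t.
have [_ eq_t] := uniq_min_size uniq_t sub_t le_size.
exact: uniq_perm (iota_uniq 0 n) eq_t.
Qed.

Section Tables.
Variables (n : nat) (t : seq nat).
Hypothesis t_perm : perm_eq t (iota 0 n).
Local Notation f := (nth 0 t).

Lemma size_table : size t = n.
Proof. by rewrite (perm_size t_perm) size_iota. Qed.

Lemma table_lt i : i < n -> f i < n.
Proof.
by move=> lt_in; rewrite -[_ < n](mem_iota 0) -(perm_mem t_perm) mem_nth ?size_table.
Qed.

Lemma table_inj i j : i < n -> j < n -> f i = f j -> i = j.
Proof.
move=> lt_in lt_jn /eqP; rewrite nth_uniq ?size_table //; first by move/eqP.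
by rewrite (perm_uniq t_perm) iota_uniq.
Qed.

Lemma table_onto v : v < n -> exists2 p, p < n & f p = v.
Proof.
rewrite -[_ < n](mem_iota 0) -(perm_mem t_perm) => v_t.
by exists (index v t); rewrite ?nth_index // -size_table index_mem.
Qed.

End Tables.

Section Encoding.
Variable n : nat.
Local Notation position := 'I_#|'I_n|.
Implicit Types (o : {ffun position -> 'I_n}) (t : seq nat).

Definition table_of o : seq nat := map val (fgraph o).

Lemma size_table_of o : size (table_of o) = n.
Proof. by rewrite size_map size_tuple !card_ord. Qed.

Lemma nth_table_of o (i : position) : nth 0 (table_of o) i = o i.
Proof. by rewrite (nth_map (o i)) ?nth_fgraph_ord // size_tuple (card_ord #|'I_n|). Qed.

Lemma table_of_inj : injective table_of.
Proof.
by move=> o o' eq_oo'; apply/ffunP => i; apply: val_inj; rewrite /= -!nth_table_of eq_oo'.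
Qed.

Lemma perm_table_of o : perm_eq (table_of o) (iota 0 n) = injectiveb o.
Proof.
have lt_n : {in table_of o, forall x, x < n} by move=> x /mapP[v _ ->]; apply: ltn_ord.
by rewrite perm_iota_uniq ?size_table_of // map_inj_uniq -?codom_ffun //; apply: val_inj.
Qed.

Lemma table_of_onto t : perm_eq t (iota 0 n) -> exists o, table_of o = t.
Proof.
move=> t_perm; exists [ffun i => insubd (cast_ord (card_ord n) i) (nth 0 t i)].
apply: (@eq_from_nth _ 0); rewrite size_table_of ?(size_table t_perm) // => k lt_kn.
have lt_k : k < #|'I_n| by rewrite card_ord.
rewrite -[k]/(val (Ordinal lt_k)) nth_table_of ffunE insubdK //=.
by rewrite unfold_in (table_lt t_perm).
Qed.

Lemma position_lt (i : position) : i < n.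
Proof. exact: leq_trans (ltn_ord i) (eq_leq (card_ord n)). Qed.

Lemma position_of x : x < n -> exists i : position, x = i.
Proof. by rewrite -{1}(card_ord n) => lt_x; exists (Ordinal lt_x). Qed.

Local Notation backedges_at o v :=
  [set p | backedge (@Pn_edge n) o p && ((o p.1 == v) || (o p.2 == v))].

Definition backedge_pair (f : nat -> nat) (c d : position) : position * position :=
  if is_backedge f c d then (c, d) else (d, c).

Lemma backedge_table_of o p :
  backedge (@Pn_edge n) o p = is_backedge (nth 0 (table_of o)) p.1 p.2.
Proof. by rewrite /backedge /is_backedge !nth_table_of. Qed.

Lemma mem_backedges_at o (c d : position) : linked (nth 0 (table_of o)) c d ->
  backedge_pair (nth 0 (table_of o)) c d \in backedges_at o (o c).
Proof.
rewrite inE /backedge_pair backedge_table_of /linked.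
by case: ifP => [cd _ | _ /= dc] /=; rewrite ?cd ?dc eqxx ?orbT.
Qed.

Lemma backedges_atP o v p : p \in backedges_at o v ->
  exists c d : position, [/\ o c = v, linked (nth 0 (table_of o)) c d &
                  p = backedge_pair (nth 0 (table_of o)) c d].
Proof.
case: p => a b; rewrite inE backedge_table_of /= => /andP[back /orP[]] /eqP o_v.
  exists a, b; split; first exact: o_v; first exact: (is_backedge_linked back).1.
  by rewrite /backedge_pair back.
exists b, a; split; first exact: o_v; first exact: (is_backedge_linked back).2.
by rewrite /backedge_pair /is_backedge; case/andP: back => lt_ab _; rewrite ltnNge ltnW.
Qed.

Lemma one_link_table_of o : injective o ->
  reflect (at_most_one_link n (nth 0 (table_of o))) [forall v, #|backedges_at o v| <= 1].
Proof.
move=> inj_o; apply: (iffP forallP) => [one | one v].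
  move=> _ _ _ /position_of[x ->] /position_of[y ->] /position_of[z ->] xy xz.
  have := card_le1_eqP (one (o x)) _ _ (mem_backedges_at xy) (mem_backedges_at xz).
  by rewrite /backedge_pair; do 2 case: ifP => _; case=> *; congruence.
apply/card_le1_eqP => _ _ /backedges_atP[c [d [c_v cd ->]]] /backedges_atP[c' [d' [c'_v cd' ->]]].
rewrite (_ : c' = c) in cd' *; last by apply: inj_o; rewrite c_v c'_v.
by rewrite (_ : d' = d) //; apply/val_inj/(one c); rewrite ?position_lt.
Qed.

Lemma matching_ordering_table_of o :
  matching_ordering (@Pn_edge n) o = matching_tableb n (table_of o).
Proof.
apply/andP/matching_tableP => [[/injectiveP inj_o one] | [t_perm one]].
  by split; [rewrite perm_table_of; apply/injectiveP | apply/(one_link_table_of inj_o)].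
have inj_o : injective o by apply/injectiveP; rewrite -perm_table_of.
by split; [apply/injectiveP | apply/(one_link_table_of inj_o)].
Qed.

End Encoding.

Definition matching_tables (n : nat) : seq (seq nat) :=
  [seq t <- permutations (iota 0 n) | matching_tableb n t].

Lemma mem_matching_tables n t : (t \in matching_tables n) = matching_tableb n t.
Proof. by rewrite mem_filter mem_permutations andb_idr // => /andP[]. Qed.

Lemma matching_tables_uniq n : uniq (matching_tables n).
Proof. exact/filter_uniq/permutations_uniq. Qed.

Lemma size_matching_tables_small n : 1 <= n <= 4 ->
  size (matching_tables n) = if n == 1 then 1 else if n == 2 then 2 else 3.
Proof. by case: n => [|[|[|[|[|n]]]]] //= _; vm_compute. Qed.

Lemma num_matching_orderings_tables n :
  num_matching_orderings (@Pn_edge n) = size (matching_tables n).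
Proof.
rewrite /num_matching_orderings cardE -(size_map (@table_of n)).
apply/perm_size/uniq_perm; rewrite ?matching_tables_uniq ?map_inj_uniq ?enum_uniq //.
  exact: table_of_inj.
move=> t; rewrite mem_matching_tables; apply/mapP/idP => [[o] | t_ok].
  by rewrite mem_enum inE matching_ordering_table_of => ok ->.
have /matching_tableP[t_perm _] := t_ok.
have [o o_t] := table_of_onto t_perm.
by exists o; rewrite // mem_enum inE matching_ordering_table_of o_t.
Qed.

(* [pair_swap n false] swaps the positions {0,1}, {2,3}, ... and [pair_swap n true]
   swaps {1,2}, {3,4}, ..., fixing 0 since 0.-1 = 0; an unpaired last position is
   fixed. *)
Definition pair_swap (n : nat) (s : bool) (i : nat) : nat :=
  if odd (i + s) then i.-1 else if i.+1 < n then i.+1 else i.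

Definition swap_table (n : nat) (s : bool) : seq nat := mkseq (pair_swap n s) n.

Section PairSwap.
Variables (n : nat) (s : bool).
Local Notation ps := (pair_swap n s).

Lemma pair_swap_near i : i.-1 <= ps i <= i.+1.
Proof. by rewrite /pair_swap; case: ifP => _; [|case: ifP => _]; lia. Qed.

Lemma pair_swap_lt i : i < n -> ps i < n.
Proof. by rewrite /pair_swap; case: ifP => _; [|case: ifP]; lia. Qed.

Lemma odd_succ_add i : odd (i.+1 + s) = ~~ odd (i + s).
Proof. by rewrite addSn. Qed.

Lemma pair_swapK i : i < n -> ps (ps i) = i.
Proof.
move=> lt_in; rewrite {2}/pair_swap; case: ifP => odd_is.
  case: i lt_in odd_is => [|i] lt_in odd_is /=; first by rewrite /pair_swap odd_is.
  by rewrite /pair_swap -[odd (i + s)]negbK -odd_succ_add odd_is /= lt_in.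
case: ifP => lt_i1n; last by rewrite /pair_swap odd_is lt_i1n.
by rewrite /pair_swap odd_succ_add odd_is.
Qed.

Lemma pair_swap_inj i j : i < n -> j < n -> ps i = ps j -> i = j.
Proof.
by move=> lt_in lt_jn eq_ij; rewrite -(pair_swapK lt_in) -(pair_swapK lt_jn) eq_ij.
Qed.

Lemma pair_swap_not_increasing3 c : c.+2 < n -> ~~ (ps c < ps c.+1 < ps c.+2).
Proof.
move=> lt_c2n; rewrite /pair_swap !odd_succ_add.
by case: odd => /=; do ?case: ifP => ?; lia.
Qed.

Lemma is_backedge_pair_swap i j : is_backedge ps i j -> ps j = (ps i).+1.
Proof.
have := pair_swap_near i; have := pair_swap_near j.
by rewrite /is_backedge /pn_edge => near_j near_i /andP[lt_ij /orP[|/eqP]]; lia.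
Qed.

Lemma pair_swap_one_link : at_most_one_link n ps.
Proof.
move=> x y z lt_xn lt_yn lt_zn.
have link_cases u v : linked ps u v ->
    (u < v /\ ps v = (ps u).+1) \/ (v < u /\ ps u = (ps v).+1).
  by case/orP => back; [left | right]; rewrite (is_backedge_pair_swap back);
     case/andP: back.
move=> /link_cases[[lt_xy e_y] | [lt_yx e_x]] /link_cases[[lt_xz e_z] | [lt_zx e_x']].
- by apply: (pair_swap_inj lt_yn lt_zn); rewrite e_y e_z.
- have := @pair_swap_not_increasing3 (ps z).
  rewrite (pair_swapK lt_zn) -e_x' (pair_swapK lt_xn) -e_y (pair_swapK lt_yn).
  by rewrite pair_swap_lt //; lia.
- have := @pair_swap_not_increasing3 (ps y).
  rewrite (pair_swapK lt_yn) -e_x (pair_swapK lt_xn) -e_z (pair_swapK lt_zn).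
  by rewrite pair_swap_lt //; lia.
- by apply: (pair_swap_inj lt_yn lt_zn); apply: succn_inj; rewrite -e_x -e_x'.
Qed.

End PairSwap.

Lemma swap_table_matching n s : matching_table n (swap_table n s).
Proof.
split.
  rewrite perm_iota_uniq ?size_mkseq // /swap_table /mkseq.
    by rewrite map_inj_in_uniq ?iota_uniq // => i j; rewrite !mem_iota; apply: pair_swap_inj.
  by move=> x /mapP[i]; rewrite mem_iota => /andP[_ lt_in] ->; apply: pair_swap_lt.
apply: (at_most_one_link_eq_in _ (@pair_swap_one_link n s)) => i lt_in.
by rewrite nth_mkseq.
Qed.

Section Classification.
Variables (n : nat) (t : seq nat).
Hypotheses (t_perm : perm_eq t (iota 0 n)) (t_one_link : at_most_one_link n (nth 0 t)).
Local Notation f := (nth 0 t).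

Lemma two_links x y z : x < n -> y < n -> z < n -> f y != f z ->
  linked f x y -> linked f x z -> False.
Proof.
move=> lt_xn lt_yn lt_zn /eqP ne_yz xy xz.
by apply/ne_yz; rewrite (t_one_link lt_xn lt_yn lt_zn xy xz).
Qed.

Lemma first_value : 4 <= n -> f 0 <= 1.
Proof.
move=> le4n; rewrite leqNgt; apply/negP => lt1f0.
have lt0n : 0 < n by lia.
have [p0 lt_p0n fp0] := table_onto t_perm lt0n.
have [p1 lt_p1n fp1] : exists2 p1, p1 < n & f p1 = if f 0 == 2 then 3 else 1.
  by apply: (table_onto t_perm); case: ifP; lia.
have pos_p p : f p != f 0 -> 0 < p by case: p => //; rewrite eqxx.
apply: (@two_links 0 p0 p1) => //.
- by rewrite fp0 fp1; case: ifP.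
- by apply: linked_of_lt; [apply: pos_p; rewrite fp0 | rewrite /pn_edge fp0]; lia.
- apply: linked_of_lt; first by apply: pos_p; rewrite fp1; case: ifP; lia.
  by rewrite /pn_edge fp1; case: ifP; lia.
Qed.

Section Step.
Variables (s : bool) (k : nat).
Local Notation ps := (pair_swap n s).
Hypotheses (lt_kn : k < n) (agree : forall i, i < k -> f i = ps i).

Lemma used_value v : v < n -> ps v < k -> f (ps v) = v.
Proof. by move=> lt_vn lt_k; rewrite agree // pair_swapK. Qed.

Lemma unused_value : k <= ps (f k).
Proof.
rewrite leqNgt; apply/negP => lt_k.
have lt_pn : ps (f k) < n by apply: ltn_trans lt_k lt_kn.
have /(table_inj t_perm lt_pn lt_kn) e := used_value (table_lt t_perm lt_kn) lt_k.
by move: lt_k; rewrite e ltnn.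
Qed.

Lemma later_value v : v < n -> k <= ps v -> f k != v -> exists2 p, k < p < n & f p = v.
Proof.
move=> lt_vn le_k ne_v; have [p lt_pn fp] := table_onto t_perm lt_vn.
exists p => //; rewrite lt_pn andbT ltn_neqAle; apply/andP; split.
  by apply: contraNneq ne_v => ->; rewrite fp.
rewrite leqNgt; apply/negP => lt_pk.
by move: le_k; rewrite -fp agree // pair_swapK //; lia.
Qed.

Lemma closing_step : 5 <= n -> 0 < k -> odd (k + s) -> f k = k.-1.
Proof.
move=> le5n lt0k odd_ks.
have ps_k : ps k = k.-1 by rewrite /pair_swap odd_ks.
have ps_k1 : ps k.-1 = k by rewrite -ps_k pair_swapK.
have f_k1 : f k.-1 = k by rewrite agree ?ps_k1 //; lia.
have ge_fk : k.-1 <= f k by have := unused_value; have := pair_swap_near n s (f k); lia.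
have ne_fk : f k != k by apply/eqP => e; have := unused_value; rewrite e ps_k; lia.
case: (eqVneq (f k) k.-1) => // ne_fk1; exfalso.
have [p0 /andP[lt_kp0 lt_p0n] fp0] := later_value (v := k.-1) ltac:(lia) ltac:(lia) ne_fk1.
have lt_fkn := table_lt t_perm lt_kn.
have link_k_p0 : linked f k p0 by apply: linked_of_lt; rewrite // /pn_edge fp0; lia.
case: (eqVneq (f k) k.+1) => [fk | ne_fk2].
  apply: (@two_links k k.-1 p0) => //; first lia; first by rewrite f_k1 fp0; lia.
  by apply: linked_of_gt; rewrite /pn_edge ?fk ?f_k1; lia.
case: (leqP 2 k) => [le2k | lt_k2].
  have lt_q : ps k.-2 < k by have := pair_swap_near n s k.-2; lia.
  have f_q := used_value (v := k.-2) ltac:(lia) lt_q.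
  apply: (@two_links p0 k (ps k.-2)) => //; first lia; first by rewrite f_q; lia.
    by apply: linked_of_gt; rewrite // /pn_edge fp0; lia.
  by apply: linked_of_gt; rewrite /pn_edge ?fp0 ?f_q; lia.
(* Here k = 1 and f k >= 3: a later position holding k.+3 or k.+1 is a second link at k. *)
pose w := if f k == k.+2 then k.+3 else k.+1.
have [p1 /andP[lt_kp1 lt_p1n] fp1] : exists2 p, k < p < n & f p = w.
  have := pair_swap_near n s w; rewrite /w.
  by case: (eqVneq (f k) k.+2) => f_k near_w; apply: later_value; lia.
apply: (@two_links k p0 p1) => //; first by rewrite fp0 fp1 /w; case: (eqVneq (f k) k.+2); lia.
apply: linked_of_lt; rewrite // /pn_edge fp1 /w.
by case: (eqVneq (f k) k.+2); lia.
Qed.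

Lemma opening_step : 0 < k -> ~~ odd (k + s) -> f k = ps k.
Proof.
move=> lt0k even_ks.
have ps_k1 : ps k.-1 = k.-2.
  by rewrite /pair_swap -[odd _]negbK -odd_succ_add prednK ?(negbTE even_ks).
have lt_q : ps k.-1 < k by rewrite ps_k1; lia.
have lt_qn : ps k.-1 < n by lia.
have f_q : f (ps k.-1) = k.-1 by apply: used_value; lia.
have lt_fkn := table_lt t_perm lt_kn.
have ge_fk : k <= f k.
  have := unused_value; have := pair_swap_near n s (f k).
  by case: (eqVneq (f k) k.-1) => [-> | ]; rewrite ?ps_k1; lia.
have ps_k : ps k = if k.+1 < n then k.+1 else k by rewrite /pair_swap (negbTE even_ks).
case: (eqVneq (f k) k.+1) => [fk | ne_fk1]; first by rewrite ps_k ifT // -fk.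
case: (eqVneq (f k) k) => [fk | ne_fk].
  rewrite ps_k; case: ifP => [lt_k1n | _]; last by [].
  have [p1 /andP[lt_kp1 lt_p1n] fp1] : exists2 p, k < p < n & f p = k.+1.
    by apply: later_value; rewrite // ?fk //; have := pair_swap_near n s k.+1; lia.
  exfalso; apply: (@two_links k (ps k.-1) p1) => //; first by rewrite f_q fp1; lia.
    by apply: linked_of_gt; rewrite // /pn_edge fk f_q; lia.
  by apply: linked_of_lt; rewrite // /pn_edge fp1 fk; lia.
have [p0 /andP[lt_kp0 lt_p0n] fp0] : exists2 p, k < p < n & f p = k.
  by apply: later_value; rewrite // ps_k; case: ifP.
exfalso; apply: (@two_links p0 k (ps k.-1)) => //; first by rewrite f_q; lia.
  by apply: linked_of_gt; rewrite // /pn_edge fp0; lia.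
by apply: linked_of_gt; rewrite /pn_edge ?fp0 ?f_q; lia.
Qed.

End Step.

Theorem table_eq_swap : 5 <= n -> t = swap_table n (f 0 == 0).
Proof.
move=> le5n; apply: (@eq_from_nth _ 0); first by rewrite size_mkseq (size_table t_perm).
rewrite (size_table t_perm) => k lt_kn; rewrite nth_mkseq //.
elim/ltn_ind: k lt_kn => k IH lt_kn.
have agree i : i < k -> f i = pair_swap n (f 0 == 0) i by move=> lt_ik; apply: IH; lia.
have [-> | lt0k] := posnP k.
  have := first_value (ltnW le5n); rewrite /pair_swap.
  by case: (f 0) => [|[|//]] _ //=; rewrite ifT //; lia.
have [odd_ks | even_ks] := boolP (odd (k + (f 0 == 0))).
  by rewrite (closing_step lt_kn agree) // /pair_swap odd_ks.
exact: opening_step.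
Qed.

End Classification.

Lemma size_matching_tables_large n : 5 <= n -> size (matching_tables n) = 2.
Proof.
move=> le5n; rewrite (@perm_size _ _ [:: swap_table n false; swap_table n true]) //.
apply: uniq_perm; rewrite ?matching_tables_uniq //=.
  rewrite inE andbT; apply/eqP => /(congr1 (nth 0 ^~ 0)).
  by rewrite !nth_mkseq ?(leq_trans _ le5n) // /pair_swap /= ifT; lia.
move=> t; rewrite mem_matching_tables !inE; apply/matching_tableP/idP => [[t_perm one] | ].
  by rewrite (table_eq_swap t_perm one le5n); case: (_ == 0); rewrite eqxx ?orbT.
by case/orP => /eqP ->; apply: swap_table_matching.
Qed.

Theorem corollary5p6 (n : nat) : 1 <= n ->
  num_matching_orderings (@Pn_edge n) =
    if n == 1 then 1 else if (n == 3) || (n == 4) then 3 else 2.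
Proof.
move=> lt0n; rewrite num_matching_orderings_tables.
have [le4n | lt4n] := leqP n 4; last by rewrite size_matching_tables_large // !ifN; lia.
by rewrite size_matching_tables_small ?lt0n //; case: n lt0n le4n => [|[|[|[|[|]]]]].
Qed.
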